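(* Let $G=(V_1\cup V_2,E)$ be a bipartite graph with $V_1=\{1,\dots,n\}$, $V_2=\{1,\dots,m\}$ and arcs from $V_1$ to $V_2$. For each arc between $j\in V_1$ and $i\in V_2$ let $t_{ij}\in\{0,1\}$ be a random variable with $\mathbb P(t_{ij}=1)=a_{ij}\in[0,1]$ (and $t_{ij}=0$ if there is no arc), all $t_{ij}$ mutually independent (independent probability coverage model). For $x\in\{0,1\}^n$ let $\sigma(x)=|\{i\in V_2:\exists j\in V_1\text{ with }x_j=1\text{ and }t_{ij}=1\}|$ be the random number of covered items, let $k$ be a positive integer and $\mathcal X=\{x\in\{0,1\}^n:\sum_{j\in V_1}x_j\le k\}$, and let $\alpha\in(0,1]$. Then there is an algorithm that, given $x\in\mathcal X$ (and the probabilities $a_{ij}$), computes $\mathrm{CVaR}_\alpha(\sigma(x))$ exactly in time polynomial in $n$ and $m$.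
   Context: For an integrable random variable $Y$ and $\alpha\in(0,1]$, $\mathrm{CVaR}_\alpha(Y)=\max_{\eta\in\mathbb R}\{\eta-\frac1\alpha\mathbb E([\eta-Y]_+)\}$, where $[z]_+=\max(z,0)$. *)

From HB Require Import structures.
From mathcomp Require Import all_boot all_order all_algebra.
From mathcomp Require Import all_classical all_reals all_analysis.
Set Implicit Arguments. Unset Strict Implicit. Unset Printing Implicit Defensive.
Import Order.TTheory GRing.Theory Num.Theory.
Local Open Scope ring_scope.
Local Open Scope classical_set_scope.

(* CVaR_alpha(Y) = sup_eta { eta - (1/alpha) E[ [eta - Y]_+ ] }  (the paper's
   max, written as a supremum in the extended reals).                 *)
Definition CVaR (R : realType) (d : measure_display) (T : measurableType d)
  (P : probability T R) (alpha : R) (Y : T -> R) : \bar R :=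
  ereal_sup [set (eta%:E - (alpha^-1)%:E *
                   \int[P]_w (Num.max (eta - Y w) 0)%:E)%E | eta in [set: R]].

Definition covered (T : Type) (n m : nat) (t : 'I_m -> 'I_n -> T -> bool)
  (x : 'I_n -> bool) (w : T) : nat :=
  #|[pred i : 'I_m | [exists j : 'I_n, x j && t i j w]]|.

Definition sigma (R : realType) (T : Type) (n m : nat)
  (t : 'I_m -> 'I_n -> T -> bool) (x : 'I_n -> bool) : T -> R :=
  fun w => (covered t x w)%:R.

(* mutual independence of the events {t_ij = 1} (equivalently, of the
   Bernoulli random variables t_ij): product rule over every subfamily *)
Definition mutually_independent (R : realType) (d : measure_display)
  (T : measurableType d) (P : probability T R) (I : finType)
  (A : I -> set T) : Prop :=
  forall S : {set I},
    P [set w : T | forall p, p \in S -> A p w] = (\prod_(p in S) P (A p))%E.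

(* Computational model: a real-RAM (exact arithmetic) while-language   *)
(* run is the number of executed statements / loop tests.            *)

Inductive nexp :=
| NConst of nat | NVar of nat
| NAdd of nexp & nexp | NSub of nexp & nexp | NMul of nexp & nexp.

Inductive rexp :=
| RNat of nexp | RVar of nat | RArr of nat & nexp
| RAdd of rexp & rexp | RSub of rexp & rexp | RMul of rexp & rexp
| RDiv of rexp & rexp.

Inductive bexp :=
| BLeN of nexp & nexp | BLeR of rexp & rexp
| BNot of bexp | BAnd of bexp & bexp.

Inductive cmd :=
| Skip
| NAssign of nat & nexp
| RAssign of nat & rexp
| AAssign of nat & nexp & rexp
| Seq of cmd & cmd
| If of bexp & cmd & cmd
| While of bexp & cmd.

Record state (R : Type) := State {
  nv : nat -> nat;
  rv : nat -> R;
  ar : nat -> nat -> R }.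

Section Sem.
Variable R : realFieldType.

Fixpoint neval (s : state R) (e : nexp) : nat :=
  match e with
  | NConst c => c
  | NVar v => nv s v
  | NAdd e1 e2 => (neval s e1 + neval s e2)%N
  | NSub e1 e2 => (neval s e1 - neval s e2)%N
  | NMul e1 e2 => (neval s e1 * neval s e2)%N
  end.

Fixpoint reval (s : state R) (e : rexp) : R :=
  match e with
  | RNat e => (neval s e)%:R
  | RVar v => rv s v
  | RArr a e => ar s a (neval s e)
  | RAdd e1 e2 => reval s e1 + reval s e2
  | RSub e1 e2 => reval s e1 - reval s e2
  | RMul e1 e2 => reval s e1 * reval s e2
  | RDiv e1 e2 => reval s e1 / reval s e2
  end.

Fixpoint beval (s : state R) (b : bexp) : bool :=
  match b with
  | BLeN e1 e2 => (neval s e1 <= neval s e2)%N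
  | BLeR e1 e2 => reval s e1 <= reval s e2
  | BNot b => ~~ beval s b
  | BAnd b1 b2 => beval s b1 && beval s b2
  end.

Definition upd {A : Type} (f : nat -> A) (i : nat) (v : A) : nat -> A :=
  fun j => if j == i then v else f j.

Inductive exec : cmd -> state R -> nat -> state R -> Prop :=
| ESkip s : exec Skip s 1 s
| ENAssign s v e :
    exec (NAssign v e) s 1 (State (upd (nv s) v (neval s e)) (rv s) (ar s))
| ERAssign s v e :
    exec (RAssign v e) s 1 (State (nv s) (upd (rv s) v (reval s e)) (ar s))
| EAAssign s a i e :
    exec (AAssign a i e) s 1
      (State (nv s) (rv s) (upd (ar s) a (upd (ar s a) (neval s i) (reval s e))))
| ESeq c1 c2 s s1 s2 k1 k2 :
    exec c1 s k1 s1 -> exec c2 s1 k2 s2 -> exec (Seq c1 c2) s (k1 + k2) s2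
| EIfT b c1 c2 s s' k :
    beval s b = true -> exec c1 s k s' -> exec (If b c1 c2) s k.+1 s'
| EIfF b c1 c2 s s' k :
    beval s b = false -> exec c2 s k s' -> exec (If b c1 c2) s k.+1 s'
| EWhileF b c s : beval s b = false -> exec (While b c) s 1 s
| EWhileT b c s s1 s2 k1 k2 :
    beval s b = true -> exec c s k1 s1 -> exec (While b c) s1 k2 s2 ->
    exec (While b c) s (k1 + k2).+1 s2.

End Sem.

(* Input encoding: nat registers 0,1,2 hold n, m, k; real register 0
   holds alpha; array 0 holds x (x_j at index j, as 0/1); array 1 holds
   the matrix a (a_ij at index i*n + j).  Everything else is 0.  The
   output is read from real register 0 at termination. *)
Definition init_state (R : realFieldType) (n m k : nat) (alpha : R)
  (x : 'I_n -> bool) (a : 'I_m -> 'I_n -> R) : state R :=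
  State
    (fun v => match v with 0 => n | 1 => m | 2 => k | _ => 0 end)%N
    (fun v => if v == 0%N then alpha else 0)
    (fun id idx =>
       if id == 0%N then
         match insub idx : option 'I_n with
         | Some j => if x j then 1 else 0 | None => 0 end
       else if id == 1%N then
         match insub (idx %/ n)%N : option 'I_m, insub (idx %% n)%N : option 'I_n with
         | Some i, Some j => a i j | _, _ => 0 end
       else 0).

(* Let r_i be the probability that item i is missed by the selected sets
   (the product of the 1 - a_ij over j with x_j = 1).  By independence the
   number of covered items sigma(x) has the law q whose generating polynomial
   is \prod_i (r_i + (1 - r_i) X); its coefficients are computed by m
   multiplications by linear polynomials.  For a law on {0, ..., m}, the map
   eta |-> eta - alpha^-1 E[(eta - sigma)_+] equals eta for eta <= 0, is affine
   between consecutive integers and nonincreasing beyond m (as alpha <= 1), so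
   its supremum, CVaR_alpha(sigma(x)), is its maximum over eta = 0, ..., m.  The
   program evaluates these m + 1 values through
   E[(k + 1 - sigma)_+] = E[(k - sigma)_+] + P(sigma <= k), in O((n + m)^2)
   steps. *)

From HB Require Import structures.
From mathcomp Require Import all_boot all_order all_algebra.
From mathcomp Require Import all_classical all_reals all_analysis.
From mathcomp Require Import zify ring lra.
Import Order.TTheory GRing.Theory Num.Theory.
Local Open Scope ring_scope.
Local Open Scope classical_set_scope.
Set Implicit Arguments. Unset Strict Implicit.

Section FiniteShortfall.
Variables (R : realFieldType) (m : nat) (q : nat -> R).

Definition shortfall (eta : R) := \sum_(v < m.+1) q v * Num.max (eta - v%:R) 0.

Definition cvar_objective (alpha eta : R) := eta - alpha^-1 * shortfall eta.

Lemma shortfall_le0 eta : eta <= 0 -> shortfall eta = 0.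
Proof.
move=> eta_le0; apply: big1 => v _.
by rewrite max_r ?mulr0 // subr_le0 (le_trans eta_le0).
Qed.

Lemma shortfallS k : (k <= m)%N ->
  shortfall k.+1%:R = shortfall k%:R + \sum_(v < k.+1) q v.
Proof.
move=> le_km; have step v : Num.max (k.+1%:R - v%:R) 0 =
    Num.max (k%:R - v%:R) 0 + (v <= k)%N%:R :> R.
  rewrite -natr1; have [le_vk|lt_kv] := leqP v k.
    have : (v%:R : R) <= k%:R by rewrite ler_nat.
    by move=> ?; rewrite !max_l //=; lra.
  have : k%:R + 1 <= (v%:R : R) by rewrite natr1 ler_nat.
  by move=> ?; rewrite !max_r //=; lra.
rewrite /shortfall (big_ord_widen m.+1 q) // [X in _ + X]big_mkcond -big_split /=.
by apply: eq_bigr => v _; rewrite step mulrDr ltnS; case: leqP; rewrite ?mulr0 ?mulr1.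
Qed.

Lemma shortfall_affine k eta : k%:R <= eta <= k.+1%:R ->
  shortfall eta =
  (k.+1%:R - eta) * shortfall k%:R + (eta - k%:R) * shortfall k.+1%:R.
Proof.
rewrite -natr1 => /andP[le_k_eta le_eta_k1].
rewrite /shortfall !mulr_sumr -big_split /=; apply: eq_bigr => v _.
have [le_vk|lt_kv] := leqP v k.
  have : (v%:R : R) <= k%:R by rewrite ler_nat.
  by move=> ?; rewrite !max_l //; [ring|lra..].
have : k%:R + 1 <= (v%:R : R) by rewrite natr1 ler_nat.
by move=> ?; rewrite !max_r //; [ring|lra..].
Qed.

Lemma shortfall_ge eta : \sum_(v < m.+1) q v = 1 -> m%:R <= eta ->
  shortfall eta = shortfall m%:R + (eta - m%:R).
Proof.
move=> q_sum1 le_m_eta.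
have -> : eta - m%:R = (\sum_(v < m.+1) q v) * (eta - m%:R) by rewrite q_sum1 mul1r.
rewrite mulr_suml /shortfall -big_split /=; apply: eq_bigr => v _.
have : (v%:R : R) <= m%:R by rewrite ler_nat -ltnS.
by move=> ?; rewrite !max_l //; [ring|lra..].
Qed.

End FiniteShortfall.

Section CVaRFiniteSupport.
Variables (R : realType) (m : nat) (q : nat -> R) (alpha : R).
Hypotheses (alpha_gt0 : 0 < alpha) (alpha_le1 : alpha <= 1).
Hypothesis q_sum1 : \sum_(v < m.+1) q v = 1.

Local Notation obj := (cvar_objective m q alpha).
Let M := \big[Num.max/0]_(k < m.+1) obj k%:R.

Lemma cvar_objective_affine k eta : k%:R <= eta <= k.+1%:R ->
  obj eta = (k.+1%:R - eta) * obj k%:R + (eta - k%:R) * obj k.+1%:R.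
Proof. by move=> /shortfall_affine eta_k; rewrite /cvar_objective eta_k -natr1; ring. Qed.

Let obj_le_M (k : nat) : (k <= m)%N -> obj k%:R <= M.
Proof. by rewrite -ltnS => lt_km; exact: (le_bigmax _ _ (Ordinal lt_km)). Qed.

Let obj_le_max eta : obj eta <= M.
Proof.
have [le_eta_m|lt_m_eta] := leP eta m%:R; last first.
  have : 1 <= alpha^-1 by rewrite invf_ge1.
  rewrite /cvar_objective (shortfall_ge q_sum1 (ltW lt_m_eta)).
  have := obj_le_M (leqnn m); rewrite /cvar_objective; nra.
suff bounded k : (k <= m)%N -> eta <= k%:R -> obj eta <= M.
  exact: bounded m (leqnn m) le_eta_m.
elim: k => [_ eta_le0|k IHk lt_km le_eta_k1].
  have := obj_le_M (leq0n m).
  by rewrite /cvar_objective !shortfall_le0 // !mulr0 !subr0; apply: le_trans.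
have [le_eta_k|lt_k_eta] := leP eta k%:R; first exact: IHk (ltnW lt_km) le_eta_k.
rewrite (@cvar_objective_affine k); last by rewrite (ltW lt_k_eta) le_eta_k1.
have a_le_M : obj k%:R <= M := obj_le_M (ltnW lt_km).
have b_le_M : obj k.+1%:R <= M := obj_le_M lt_km.
set a := obj k%:R in a_le_M *; set b := obj k.+1%:R in b_le_M *.
rewrite -natr1 in le_eta_k1 *.
have : 0 <= (k%:R + 1 - eta) * (M - a) by apply: mulr_ge0; lra.
have : 0 <= (eta - k%:R) * (M - b) by apply: mulr_ge0; lra.
lra.
Qed.

Lemma ereal_sup_cvar_objective :
  ereal_sup [set (obj eta)%:E | eta in [set: R]] = M%:E.
Proof.
apply/eqP; rewrite eq_le; apply/andP; split.
  by apply: ge_ereal_sup => _ [eta _ <-]; rewrite lee_fin obj_le_max.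
rewrite /M -EFin_bigmax; apply: bigmax_le => [|k _]; apply: ereal_sup_ubound.
  by exists 0 => //; rewrite /cvar_objective shortfall_le0 // mulr0 subr0.
by exists k%:R.
Qed.

End CVaRFiniteSupport.

(* Generating polynomial of the indicator that an item is covered, when it is
   missed with probability [r]. *)
Definition cover_poly (R : nzRingType) (r : R) : {poly R} := r%:P + (1 - r) *: 'X.

Lemma coef_mul_cover_poly (R : comNzRingType) (p : {poly R}) (r : R) k :
  (p * cover_poly r)`_k = p`_k * r + (if k is k'.+1 then p`_k' else 0) * (1 - r).
Proof.
rewrite /cover_poly mulrDr coefD coefMC -scalerAr coefZ coefMX.
by case: k => [|k] /=; [rewrite mulr0 mul0r | rewrite [_ * p`_k]mulrC].
Qed.

Section CoverageGeneratingPolynomial.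
Variables (R : comNzRingType) (n m : nat) (x : 'I_n -> bool) (a : 'I_m -> 'I_n -> R).

Definition outcome := {ffun 'I_m -> {ffun 'I_n -> bool}}.

Definition row_prob (i : 'I_m) (row : {ffun 'I_n -> bool}) :=
  \prod_j (if row j then a i j else 1 - a i j).

Definition outcome_prob (e : outcome) := \prod_i row_prob i (e i).

Definition row_covered (row : {ffun 'I_n -> bool}) := [exists j, x j && row j].

Definition ncovered (e : outcome) := #|[pred i | row_covered (e i)]|.

Definition miss_prob (i : 'I_m) := \prod_j (if x j then 1 - a i j else 1).

Definition ncovered_poly := \prod_(i < m) cover_poly (miss_prob i).

Lemma sum_row_prob i : \sum_row row_prob i row = 1.
Proof.
rewrite /row_prob -(bigA_distr_bigA (fun j b => if b then a i j else 1 - a i j)).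
by apply: big1 => j _; rewrite big_bool /=; ring.
Qed.

Lemma sum_row_prob_uncovered i :
  \sum_row row_prob i row * (~~ row_covered row)%:R = miss_prob i.
Proof.
have prod_indicator (b : 'I_n -> bool) : \prod_j (b j)%:R = [forall j, b j]%:R :> R.
  case: (boolP [forall j, b j]) => [/forallP all_j|/forallPn[j /negbTE nj]].
    by apply: big1 => j _; rewrite all_j.
  by rewrite (bigD1 j) //= nj mul0r.
have split_row row : row_prob i row * (~~ row_covered row)%:R =
    \prod_j ((if row j then a i j else 1 - a i j) * (~~ (x j && row j))%:R).
  by rewrite big_split /= prod_indicator /row_covered negb_exists.
under eq_bigr do rewrite split_row.
rewrite -(bigA_distr_bigA (fun j b => (if b then a i j else 1 - a i j) * (~~ (x j && b))%:R)).
by apply: eq_bigr => j _; rewrite big_bool /=; case: (x j) => /=; ring.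
Qed.

Lemma row_generating_poly i :
  \sum_row (row_prob i row)%:P * (if row_covered row then 'X else 1) =
  cover_poly (miss_prob i).
Proof.
transitivity (\sum_row ((row_prob i row)%:P * 'X +
    (row_prob i row * (~~ row_covered row)%:R)%:P * (1 - 'X))).
  by apply: eq_bigr => row _; case: row_covered; rewrite /= ?mulr0 ?mulr1 ?polyC0; ring.
rewrite big_split /= -!big_distrl /= -!rmorph_sum /= sum_row_prob.
by rewrite sum_row_prob_uncovered /cover_poly -mul_polyC polyCB; ring.
Qed.

Lemma outcome_generating_poly :
  \sum_e outcome_prob e *: 'X^(ncovered e) = ncovered_poly.
Proof.
rewrite /ncovered_poly; under [RHS]eq_bigr do rewrite -row_generating_poly.
rewrite bigA_distr_bigA /=; apply: eq_bigr => e _.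
by rewrite -mul_polyC rmorph_prod -prodr_const [X in _ * X]big_mkcond -big_split.
Qed.

Lemma sum_outcome_prob_comp (h : nat -> R) :
  \sum_e outcome_prob e * h (ncovered e) = \sum_(v < m.+1) ncovered_poly`_v * h v.
Proof.
have coefE v : ncovered_poly`_v = \sum_e outcome_prob e * (ncovered e == v)%:R.
  by rewrite -outcome_generating_poly coef_sum; apply: eq_bigr => e _;
    rewrite coefZ coefXn eq_sym.
under [RHS]eq_bigr do rewrite coefE big_distrl /=.
rewrite exchange_big /=; apply: eq_bigr => e _.
have le_cov_m : (ncovered e < m.+1)%N by rewrite ltnS -[m in (_ <= m)%N]card_ord max_card.
rewrite (bigD1 (Ordinal le_cov_m)) //= eqxx mulr1 big1 ?addr0 // => v /negbTE nv.
by rewrite eq_sym -val_eqE /= in nv; rewrite nv mulr0 mul0r.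
Qed.

Lemma sum_outcome_prob : \sum_e outcome_prob e = 1.
Proof.
rewrite /outcome_prob -(bigA_distr_bigA (fun i row => row_prob i row)) /=.
by apply: big1 => i _; exact: sum_row_prob.
Qed.

Lemma sum_coef_ncovered_poly : \sum_(v < m.+1) ncovered_poly`_v = 1.
Proof.
have := sum_outcome_prob_comp (fun=> 1).
by rewrite -!big_distrl /= !mulr1 sum_outcome_prob.
Qed.

End CoverageGeneratingPolynomial.

Section CostedTriples.
Variable R : realFieldType.
Implicit Types (P Q S : state R -> Prop) (c : cmd).

Definition triple c P Q (K : nat) :=
  forall s, P s -> exists s' k, [/\ exec c s k s', (k <= K)%N & Q s'].

Lemma triple_seq c1 c2 P Q S K1 K2 :
  triple c1 P Q K1 -> triple c2 Q S K2 -> triple (Seq c1 c2) P S (K1 + K2).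
Proof.
move=> h1 h2 s /h1[s1 [k1 [ex1 le_k1 /h2[s2 [k2 [ex2 le_k2 Ss2]]]]]].
by exists s2, (k1 + k2)%N; split; [exact: ESeq ex1 ex2 | exact: leq_add |].
Qed.

Lemma triple_le_cost c P Q K K' : (K <= K')%N -> triple c P Q K -> triple c P Q K'.
Proof.
move=> le_K h s /h[s' [k [ex le_k Qs']]].
by exists s', k; split=> //; exact: leq_trans le_K.
Qed.

Lemma triple_skip P Q : (forall s, P s -> Q s) -> triple Skip P Q 1.
Proof. by move=> PQ s /PQ Qs; exists s, 1%N; split=> //; exact: ESkip. Qed.

Lemma triple_nassign v e P Q :
  (forall s, P s -> Q (State (upd (nv s) v (neval s e)) (rv s) (ar s))) ->
  triple (NAssign v e) P Q 1.
Proof.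
by move=> PQ s Ps; exists (State (upd (nv s) v (neval s e)) (rv s) (ar s)), 1%N;
  split; [exact: ENAssign | | exact: PQ].
Qed.

Lemma triple_rassign v e P Q :
  (forall s, P s -> Q (State (nv s) (upd (rv s) v (reval s e)) (ar s))) ->
  triple (RAssign v e) P Q 1.
Proof.
by move=> PQ s Ps; exists (State (nv s) (upd (rv s) v (reval s e)) (ar s)), 1%N;
  split; [exact: ERAssign | | exact: PQ].
Qed.

Lemma triple_aassign a i e P Q :
  (forall s, P s ->
     Q (State (nv s) (rv s) (upd (ar s) a (upd (ar s a) (neval s i) (reval s e))))) ->
  triple (AAssign a i e) P Q 1.
Proof.
move=> PQ s Ps.
exists (State (nv s) (rv s) (upd (ar s) a (upd (ar s a) (neval s i) (reval s e)))), 1%N.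
by split; [exact: EAAssign | | exact: PQ].
Qed.

Lemma triple_if b c1 c2 P Q K :
  triple c1 (fun s => P s /\ beval s b = true) Q K ->
  triple c2 (fun s => P s /\ beval s b = false) Q K ->
  triple (If b c1 c2) P Q K.+1.
Proof.
move=> h1 h2 s Ps; case bs: (beval s b).
  have [s' [k [ex le_k Qs']]] := h1 s (conj Ps bs).
  by exists s', k.+1; split=> //; exact: EIfT.
have [s' [k [ex le_k Qs']]] := h2 s (conj Ps bs).
by exists s', k.+1; split=> //; exact: EIfF.
Qed.

Lemma triple_while b c (I : nat -> state R -> Prop) N K :
  (forall i s, I i s -> beval s b = (i < N)%N) ->
  (forall i, (i < N)%N -> triple c (I i) (I i.+1) K) ->
  triple (While b c) (I 0%N) (I N) (N * K.+1 + 1).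
Proof.
move=> guard body.
suff loop d i : (i + d = N)%N -> triple (While b c) (I i) (I N) (d * K.+1 + 1).
  exact: loop.
elim: d i => [|d IHd] i iN s Is.
  rewrite addn0 in iN; subst i.
  by exists s, 1%N; split=> //; apply: EWhileF; rewrite (guard _ _ Is) ltnn.
have lt_iN : (i < N)%N by rewrite -iN addnS ltnS leq_addr.
have [s1 [k1 [ex1 le_k1 Is1]]] := body i lt_iN s Is.
have [s2 [k2 [ex2 le_k2 Is2]]] := IHd i.+1 (etrans (addSnnS i d) iN) s1 Is1.
exists s2, (k1 + k2).+1; split=> //; first by apply: EWhileT ex1 ex2; rewrite (guard _ _ Is).
by rewrite mulSn; lia.
Qed.

End CostedTriples.

Definition one := RNat (NConst 1).
Definition incr v := NAssign v (NAdd (NVar v) (NConst 1)).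

(* Registers.  nat: 0 = n, 1 = m, 3 = item i, 4 = set j, 5 = step u of the
   polynomial product, 6 = threshold k.  real: 0 = alpha (finally the output),
   1 = miss probability of item i, 2 = running maximum, 3 = \sum_(v < k) item_pmf v,
   4 = shortfall at k, 6 = objective at k.  Array 2 stores coefficient v of
   the current polynomial at index v.+1, above a 0 sentinel at index 0, so that
   multiplying by [cover_poly r] in place, from the top coefficient down,
   needs no special case. *)
Definition miss_body :=
  Seq (RAssign 1 (RMul (RVar 1) (RSub one (RMul (RArr 0 (NVar 4))
                   (RArr 1 (NAdd (NMul (NVar 3) (NVar 0)) (NVar 4)))))))
      (incr 4).
Definition miss_loop := While (BLeN (NAdd (NVar 4) (NConst 1)) (NVar 0)) miss_body.

Definition mul_body :=
  Seq (AAssign 2 (NSub (NAdd (NVar 1) (NConst 1)) (NVar 5))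
         (RAdd (RMul (RArr 2 (NSub (NAdd (NVar 1) (NConst 1)) (NVar 5))) (RVar 1))
               (RMul (RArr 2 (NSub (NVar 1) (NVar 5))) (RSub one (RVar 1)))))
      (incr 5).
Definition mul_loop := While (BLeN (NVar 5) (NVar 1)) mul_body.

Definition item_body :=
  Seq (RAssign 1 one) (Seq (NAssign 4 (NConst 0)) (Seq miss_loop
  (Seq (NAssign 5 (NConst 0)) (Seq mul_loop (incr 3))))).
Definition item_loop := While (BLeN (NAdd (NVar 3) (NConst 1)) (NVar 1)) item_body.

Definition max_body :=
  Seq (RAssign 6 (RSub (RNat (NVar 6)) (RDiv (RVar 4) (RVar 0))))
  (Seq (If (BLeR (RVar 2) (RVar 6)) (RAssign 2 (RVar 6)) Skip)
  (Seq (RAssign 3 (RAdd (RVar 3) (RArr 2 (NAdd (NVar 6) (NConst 1)))))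
  (Seq (RAssign 4 (RAdd (RVar 4) (RVar 3))) (incr 6)))).
Definition max_loop := While (BLeN (NVar 6) (NVar 1)) max_body.

Definition cvar_prog :=
  Seq (AAssign 2 (NConst 1) one) (Seq (NAssign 3 (NConst 0)) (Seq item_loop
  (Seq (RAssign 2 (RNat (NConst 0))) (Seq (RAssign 3 (RNat (NConst 0)))
  (Seq (RAssign 4 (RNat (NConst 0))) (Seq (NAssign 6 (NConst 0))
  (Seq max_loop (RAssign 0 (RVar 2))))))))).

Lemma bigmax_ord_recr d (T : orderType d) (x : T) n (F : nat -> T) :
  \big[Order.max/x]_(i < n.+1) F i = Order.max (\big[Order.max/x]_(i < n) F i) (F n).
Proof.
rewrite (bigD1_ord ord_max) // maxC; congr Order.max.
by apply: eq_bigr => i _; rewrite lift_max.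
Qed.

Section CvarProgCorrect.
Variables (R : realFieldType) (n m : nat) (alpha : R) (A0 A1 : nat -> R).

Definition item_miss (i : nat) : R := \prod_(j < n) (1 - A0 j * A1 (i * n + j)%N).

Definition partial_poly (i : nat) : {poly R} := \prod_(l < i) cover_poly (item_miss l).

Definition item_pmf (v : nat) : R := (partial_poly m)`_v.

Definition inputs_ok (s : state R) :=
  [/\ nv s 0 = n, nv s 1 = m, rv s 0 = alpha, ar s 0 = A0 & ar s 1 = A1].

Definition stores (s : state R) (f : nat -> R) :=
  ar s 2 0 = 0 /\ forall v, (v <= m)%N -> ar s 2 v.+1 = f v.

Definition item_inv i s :=
  [/\ inputs_ok s, nv s 3 = i & stores s (fun v => (partial_poly i)`_v)].

Definition miss_inv i j s :=
  [/\ item_inv i s, nv s 4 = j & rv s 1 = \prod_(l < j) (1 - A0 l * A1 (i * n + l)%N)].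

Definition mul_inv i u s :=
  [/\ inputs_ok s, nv s 3 = i, nv s 5 = u, rv s 1 = item_miss i &
      stores s (fun v => (partial_poly (if (m.+1 - u <= v)%N then i.+1 else i))`_v)].

Definition max_state k M C F s :=
  [/\ nv s 1 = m, rv s 0 = alpha, stores s item_pmf, nv s 6 = k &
      [/\ rv s 2 = M, rv s 3 = C & rv s 4 = F]].

Local Notation best k := (\big[Num.max/0]_(l < k) cvar_objective m item_pmf alpha l%:R).

Definition max_inv k :=
  max_state k (best k) (\sum_(v < k) item_pmf v) (shortfall m item_pmf k%:R).

Lemma miss_body_ok i j : triple miss_body (miss_inv i j) (miss_inv i j.+1) 2.
Proof.
apply: (triple_seq (K1 := 1) (K2 := 1) (Q := fun s => [/\ item_inv i s, nv s 4 = j &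
  rv s 1 = \prod_(l < j.+1) (1 - A0 l * A1 (i * n + l)%N)])).
  apply: triple_rassign => s [[[n_s m_s alpha_s A0_s A1_s] i_s poly_s] j_s r_s].
  by split=> //=; rewrite /upd /= r_s j_s i_s n_s A0_s A1_s big_ord_recr.
apply: triple_nassign => s [[[n_s m_s alpha_s A0_s A1_s] i_s poly_s] j_s r_s].
by split; rewrite /upd /= ?j_s ?addn1.
Qed.

Lemma mul_body_ok i u : (u <= m)%N ->
  triple mul_body (mul_inv i u) (mul_inv i u.+1) 2.
Proof.
move=> le_um.
apply: (triple_seq (K1 := 1) (K2 := 1) (Q := fun s =>
  [/\ inputs_ok s, nv s 3 = i, nv s 5 = u, rv s 1 = item_miss i &
   stores s (fun v => (partial_poly (if (m.+1 - u.+1 <= v)%N then i.+1 else i))`_v)])).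
  apply: triple_aassign => s [[n_s m_s alpha_s A0_s A1_s] i_s u_s r_s [zero_s coef_s]].
  rewrite /inputs_ok /stores /upd /= m_s u_s r_s.
  split=> //; split=> [|v le_vm]; first by case: eqP => // /esym; lia.
  case: eqP => [top|not_top]; last first.
    rewrite coef_s //; congr (partial_poly (if _ then _ else _))`_v.
    by apply/idP/idP; lia.
  have -> : (m - u)%N = v by lia.
  rewrite -top coef_s // ifN -?ltnNge; last by lia.
  rewrite ifT; last by lia.
  rewrite [partial_poly i.+1]big_ord_recr /= coef_mul_cover_poly.
  case: v le_vm top => [|v] le_vm top; first by rewrite zero_s.
  by rewrite coef_s ?ifN // -?ltnNge; lia.
apply: triple_nassign => s [[n_s m_s alpha_s A0_s A1_s] i_s u_s r_s coef_s].
by split; rewrite /upd /= ?u_s ?addn1.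
Qed.

Lemma miss_loop_ok i : triple miss_loop (miss_inv i 0) (miss_inv i n) (n * 3 + 1).
Proof.
apply: triple_while => [j s [[[n_s _ _ _ _] _ _] j_s _]|j _]; last exact: miss_body_ok.
by rewrite /= n_s j_s addn1.
Qed.

Lemma mul_loop_ok i : triple mul_loop (mul_inv i 0) (mul_inv i m.+1) (m.+1 * 3 + 1).
Proof.
apply: triple_while => [u s [[_ m_s _ _ _] _ u_s _ _]|u]; last exact: mul_body_ok.
by rewrite /= m_s u_s ltnS.
Qed.

Lemma item_body_ok i : triple item_body (item_inv i) (item_inv i.+1) (3 * n + 3 * m + 9).
Proof.
apply: (@triple_le_cost _ _ _ _ (1 + (1 + (n * 3 + 1 + (1 + (m.+1 * 3 + 1 + 1)))))%N);
  first lia.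
apply: (triple_seq (Q := fun s => item_inv i s /\ rv s 1 = 1)).
  by apply: triple_rassign => s Is; split.
apply: (triple_seq (Q := miss_inv i 0)).
  by apply: triple_nassign => s [Is r_s]; split; rewrite ?big_ord0.
apply: triple_seq; first exact: miss_loop_ok.
apply: (triple_seq (Q := mul_inv i 0)).
  apply: triple_nassign => s [[inputs_s i_s [zero_s coef_s]] _ r_s].
  by split=> //; split=> // v le_vm; rewrite coef_s //; case: ifP => //; lia.
apply: triple_seq; first exact: mul_loop_ok.
apply: triple_nassign => s [[n_s m_s alpha_s A0_s A1_s] i_s _ _ [zero_s coef_s]].
by split; rewrite /upd /= ?i_s ?addn1 //; split=> // v le_vm; rewrite coef_s // subnn.
Qed.

Lemma item_loop_ok :
  triple item_loop (item_inv 0) (item_inv m) (m * (3 * n + 3 * m + 9).+1 + 1).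
Proof.
apply: triple_while => [i s [[_ m_s _ _ _] i_s _]|i _]; last exact: item_body_ok.
by rewrite /= m_s i_s addn1.
Qed.

Lemma max_body_ok k : (k <= m)%N -> triple max_body (max_inv k) (max_inv k.+1) 6.
Proof.
move=> le_km; apply: (@triple_le_cost _ _ _ _ (1 + (1.+1 + (1 + (1 + 1))))%N) => //.
have best_step : best k.+1 = Num.max (best k) (cvar_objective m item_pmf alpha k%:R).
  exact: (bigmax_ord_recr _ _ (fun l => cvar_objective m item_pmf alpha l%:R)).
apply: (triple_seq (Q := fun s =>
  max_inv k s /\ rv s 6 = cvar_objective m item_pmf alpha k%:R)).
  apply: triple_rassign => s Is; split=> //.
  case: Is => _ alpha_s _ k_s [_ _ F_s].
  by rewrite /upd /= k_s F_s alpha_s /cvar_objective mulrC.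
apply: (triple_seq (Q := max_state k (best k.+1) (\sum_(v < k) item_pmf v)
                                   (shortfall m item_pmf k%:R))).
  apply: triple_if.
    apply: triple_rassign => s [[[m_s alpha_s pmf_s k_s [M_s C_s F_s]] obj_s] /= M_le].
    by split=> //; split=> //; rewrite /upd /= best_step maxEle -M_s -obj_s M_le.
  apply: triple_skip => s [[[m_s alpha_s pmf_s k_s [M_s C_s F_s]] obj_s] /= M_gt].
  by split=> //; split=> //; rewrite best_step maxEle -M_s -obj_s M_gt.
apply: (triple_seq (Q := max_state k (best k.+1) (\sum_(v < k.+1) item_pmf v)
                                   (shortfall m item_pmf k%:R))).
  apply: triple_rassign => s [m_s alpha_s [zero_s pmf_s] k_s [M_s C_s F_s]].
  by split=> //; split=> //; rewrite /upd /= C_s k_s addn1 pmf_s // big_ord_recr.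
apply: (triple_seq (Q := max_state k (best k.+1) (\sum_(v < k.+1) item_pmf v)
                                   (shortfall m item_pmf k.+1%:R))).
  apply: triple_rassign => s [m_s alpha_s pmf_s k_s [M_s C_s F_s]].
  by split=> //; split=> //; rewrite /upd /= F_s C_s shortfallS.
apply: triple_nassign => s [m_s alpha_s pmf_s k_s [M_s C_s F_s]].
by split; rewrite /upd /= ?k_s ?addn1.
Qed.

Lemma max_loop_ok : triple max_loop (max_inv 0) (max_inv m.+1) (m.+1 * 7 + 1).
Proof.
apply: triple_while => [k s [m_s _ _ k_s _]|k]; last exact: max_body_ok.
by rewrite /= m_s k_s ltnS.
Qed.

Lemma cvar_prog_correct :
  triple cvar_prog (fun s => inputs_ok s /\ forall idx, ar s 2 idx = 0)
    (fun s => rv s 0 = best m.+1) (40 * (n + m + 1) ^ 2).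
Proof.
apply: (@triple_le_cost _ _ _ _ (1 + (1 + ((m * (3 * n + 3 * m + 9).+1 + 1) +
  (1 + (1 + (1 + (1 + ((m.+1 * 7 + 1) + 1)))))))))%N; first nia.
apply: (triple_seq (Q := fun s => inputs_ok s /\ stores s (fun v => (partial_poly 0)`_v))).
  apply: triple_aassign => s [inputs_s zero_s]; split=> //.
  rewrite /stores /upd /= zero_s; split=> // v _.
  by rewrite /partial_poly big_ord0 coef1; case: v => [|v] /=; rewrite ?zero_s.
apply: (triple_seq (Q := item_inv 0)); first by apply: triple_nassign => s [].
apply: triple_seq; first exact: item_loop_ok.
apply: (triple_seq (Q := fun s => item_inv m s /\ rv s 2 = 0)).
  by apply: triple_rassign.
apply: (triple_seq (Q := fun s => [/\ item_inv m s, rv s 2 = 0 & rv s 3 = 0])).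
  by apply: triple_rassign => s [].
apply: (triple_seq (Q := fun s => [/\ item_inv m s, rv s 2 = 0, rv s 3 = 0 & rv s 4 = 0])).
  by apply: triple_rassign => s [].
apply: (triple_seq (Q := max_inv 0)).
  apply: triple_nassign => s [[[_ m_s alpha_s _ _] _ pmf_s] best_s C_s F_s].
  by split=> //; split; rewrite ?big_ord0 ?shortfall_le0.
apply: triple_seq; first exact: max_loop_ok.
by apply: triple_rassign => s [_ _ _ _ []].
Qed.

End CvarProgCorrect.

Section IndependentEvents.
Context (R : realType) (d : measure_display) (T : measurableType d).
Variables (P : probability T R) (I : finType) (A : I -> set T) (p : I -> R).
Hypotheses (mA : forall i, measurable (A i)) (PA : forall i, P (A i) = (p i)%:E).
Hypothesis indep : mutually_independent P A.

Definition atom (eps : I -> bool) := [set w | forall i, A i w <-> eps i].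

Let pattern (S : {set I}) (s : seq I) :=
  [set w | (forall i, i \in S -> A i w) /\ (forall i, i \in s -> ~ A i w)].

Let measurable_pattern S s : measurable (pattern S s).
Proof.
have -> : pattern S s =
    \bigcap_(i in [set i | i \in S]) A i `&` \bigcap_(i in [set i | i \in s]) ~` A i.
  by apply/seteqP; split=> w [inS ins].
by apply: measurableI; apply: fin_bigcap_measurable => // i _; exact: measurableC.
Qed.

Let probability_pattern (s : seq I) : uniq s ->
  forall S : {set I}, {in s, forall i, i \notin S} ->
  P (pattern S s) = (\prod_(i in S) p i * \prod_(i <- s) (1 - p i))%:E.
Proof.
elim: s => [|i s IHs] /= uniq_s S disj.
  have -> : pattern S [::] = [set w | forall i, i \in S -> A i w].
    by apply/seteqP; split=> w /=; [case | split].
  by rewrite indep big_nil mulr1 -prodEFin; apply: eq_bigr => i _.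
case/andP: uniq_s => i_notin_s uniq_s.
have disj_s : {in s, forall j, j \notin S} by move=> j js; apply: disj; rewrite inE js orbT.
have disj_iS : {in s, forall j, j \notin i |: S}.
  move=> j js; rewrite in_setU1 negb_or disj_s // andbT.
  by apply: contraNneq i_notin_s => <-.
have -> : pattern S (i :: s) = pattern S s `\` A i.
  apply/seteqP; split=> w /= [inS ins]; first by split; [split=> // j js|]; apply: ins;
    rewrite inE ?js ?orbT ?eqxx.
  by case: inS => inS ins'; split=> // j; rewrite inE => /orP[/eqP->|]; [|exact: ins'].
have iS : i \notin S by apply: disj; rewrite inE eqxx.
have PAi : pattern S s `&` A i = pattern (i |: S) s.
  apply/seteqP; split=> w /= [].
    by move=> [inS ins] Ai; split=> // j; rewrite in_setU1 => /orP[/eqP->|/inS].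
  by move=> inS ins; split; [split=> // j jS; apply: inS; rewrite in_setU1 jS orbT|
    apply: inS; rewrite in_setU1 eqxx].
have PS := IHs uniq_s S disj_s.
have PS_fin : (P (pattern S s) < +oo)%E by rewrite PS ltry.
have PD : P (pattern S s `\` A i) = (P (pattern S s) - P (pattern S s `&` A i))%E.
  exact: measureD (measurable_pattern S s) (mA i) PS_fin.
rewrite PD PAi PS (IHs uniq_s _ disj_iS) -EFinB big_setU1 //= big_cons.
by congr (_%:E); ring.
Qed.

Let atomE eps : atom eps = pattern [set i | eps i]%SET (enum [set i | ~~ eps i]%SET).
Proof.
apply/seteqP; split=> w /=.
  by move=> Aw; split=> i; rewrite ?mem_enum inE; [move/Aw | move/negP => ne /Aw].
move=> [inS ins] i; split=> [Ai|ei]; last by apply: inS; rewrite inE.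
by apply/negPn/negP => ne; apply: (ins i) Ai; rewrite mem_enum inE.
Qed.

Lemma measurable_atom eps : measurable (atom eps).
Proof. by rewrite atomE. Qed.

Lemma probability_atom eps :
  P (atom eps) = (\prod_i (if eps i then p i else 1 - p i))%:E.
Proof.
have disj : {in enum [set i | ~~ eps i]%SET, forall i, i \notin [set i | eps i]%SET}.
  by move=> i; rewrite mem_enum !inE => /negbTE->.
rewrite atomE (probability_pattern (enum_uniq _) disj) big_enum; congr _%:E.
rewrite [RHS](bigID eps) /=; congr (_ * _).
  by apply: eq_big => [i|i]; rewrite ?inE // => ->.
by apply: eq_big => [i|i]; rewrite ?inE // => /negbTE->.
Qed.

End IndependentEvents.

Section FiniteValuedIntegral.
Context (R : realType) (d : measure_display) (T : measurableType d).
Variables (mu : {measure set T -> \bar R}) (F : finType) (g : T -> F) (pi : F -> R).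
Hypotheses (mg : forall y, measurable (g @^-1` [set y]))
  (mu_g : forall y, mu (g @^-1` [set y]) = (pi y)%:E).

Lemma ge0_integral_comp_fin (h : F -> R) : (forall y, 0 <= h y) ->
  (\int[mu]_w (h (g w))%:E = (\sum_y h y * pi y)%:E)%E.
Proof.
move=> h_ge0.
transitivity (\int[mu]_w (\sum_y (h y)%:E * (\1_(g @^-1` [set y]) w)%:E))%E.
  apply: eq_integral => w _.
  rewrite (bigD1 (g w)) //= indicE mem_set // mule1 big1 ?adde0 // => y ny.
  by rewrite indicE memNset ?mule0 //= => /esym/eqP; rewrite (negbTE ny).
rewrite ge0_integral_sum //; last 2 first.
- move=> y; apply: measurable_funeM; apply/measurable_realfun.measurable_EFinP.
  exact: measurable_realfun.measurable_indic.
- by move=> y w _; rewrite mule_ge0 // lee_fin.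
rewrite -sumEFin; apply: eq_bigr => y _.
rewrite ge0_integralZl ?lee_fin //; last first.
  by apply/measurable_realfun.measurable_EFinP; exact: measurable_realfun.measurable_indic.
by rewrite integral_indic // setIT mu_g EFinM.
Qed.

End FiniteValuedIntegral.

Section CoverageModel.
Context (R : realType) (d : measure_display) (T : measurableType d) (P : probability T R).
Variables (n m : nat) (a : 'I_m -> 'I_n -> R) (t : 'I_m -> 'I_n -> T -> bool).
Variable x : 'I_n -> bool.
Hypotheses (mt : forall i j, measurable [set w | t i j w])
  (Pt : forall i j, P [set w | t i j w] = (a i j)%:E)
  (indep : mutually_independent P (fun p : 'I_m * 'I_n => [set w | t p.1 p.2 w])).

Definition realised_outcome (w : T) : outcome n m := [ffun i => [ffun j => t i j w]].

Let realised_outcomeE e : realised_outcome @^-1` [set e] =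
  atom (fun p : 'I_m * 'I_n => [set w | t p.1 p.2 w]) (fun p => e p.1 p.2).
Proof.
apply/seteqP; split=> w /=; first by move=> <- [i j]; rewrite /= !ffunE.
move=> tw; apply/ffunP => i; apply/ffunP => j; rewrite !ffunE.
by apply/idP/idP => /(tw (i, j)).
Qed.

Lemma sigma_realised_outcome w : sigma R t x w = (ncovered x (realised_outcome w))%:R.
Proof.
rewrite /sigma /covered /ncovered; congr _%:R; apply: eq_card => i.
by rewrite !inE /row_covered; apply: eq_existsb => j; rewrite !ffunE.
Qed.

Lemma integral_shortfall_sigma eta :
  (\int[P]_w (Num.max (eta - sigma R t x w) 0)%:E =
   (shortfall m (fun v => (ncovered_poly x a)`_v) eta)%:E)%E.
Proof.
under eq_integral do rewrite sigma_realised_outcome.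
rewrite (@ge0_integral_comp_fin _ _ _ P _ realised_outcome (outcome_prob a) _ _
  (fun e => Num.max (eta - (ncovered x e)%:R) 0)).
- rewrite /shortfall -(sum_outcome_prob_comp x a (fun v => Num.max (eta - v%:R) 0)).
  by congr _%:E; apply: eq_bigr => e _; rewrite mulrC.
- by move=> e; rewrite realised_outcomeE; exact: measurable_atom.
- move=> e; rewrite realised_outcomeE /outcome_prob /row_prob pair_big.
  exact: (probability_atom (fun p => mt p.1 p.2) (fun p => Pt p.1 p.2) indep).
- by move=> e; rewrite le_max lexx orbT.
Qed.

Lemma CVaR_sigma alpha : 0 < alpha -> alpha <= 1 ->
  CVaR P alpha (sigma R t x) =
  (\big[Num.max/0]_(k < m.+1)
     cvar_objective m (fun v => (ncovered_poly x a)`_v) alpha k%:R)%:E.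
Proof.
move=> alpha_gt0 alpha_le1.
rewrite -(ereal_sup_cvar_objective alpha_gt0 alpha_le1 (sum_coef_ncovered_poly x a)).
congr ereal_sup; apply: eq_imagel => eta _.
by rewrite integral_shortfall_sigma -EFinM -EFinB.
Qed.

End CoverageModel.

Section InitialState.
Variables (R : realFieldType) (n m k : nat) (alpha : R).
Variables (x : 'I_n -> bool) (a : 'I_m -> 'I_n -> R).
Let s0 := init_state k alpha x a.

Lemma init_state_inputs :
  inputs_ok n m alpha (ar s0 0) (ar s0 1) s0 /\ forall idx, ar s0 2 idx = 0.
Proof. by []. Qed.

Lemma item_miss_init_state (i : 'I_m) :
  item_miss n (ar s0 0) (ar s0 1) i = miss_prob x a i.
Proof.
apply: eq_bigr => j _; have n_gt0 : (0 < n)%N by apply: leq_ltn_trans (ltn_ord j).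
rewrite /s0 /init_state /= divnMDl // divn_small // addn0 modnMDl modn_small //.
by rewrite !valK; case: (x j); rewrite ?mul1r ?mul0r ?subr0.
Qed.

Lemma item_pmf_init_state :
  item_pmf n m (ar s0 0) (ar s0 1) = fun v => (ncovered_poly x a)`_v.
Proof.
by rewrite /item_pmf /partial_poly; under eq_bigr do rewrite item_miss_init_state.
Qed.

End InitialState.

Theorem proposition4 :
  exists (prog : cmd) (c e : nat),
  forall (R : realType) (d : measure_display) (T : measurableType d)
    (P : probability T R) (n m k : nat) (alpha : R)
    (E : 'I_m -> 'I_n -> bool) (a : 'I_m -> 'I_n -> R)
    (t : 'I_m -> 'I_n -> T -> bool) (x : 'I_n -> bool),
    (0 < k)%N ->
    0 < alpha <= 1 ->
    (forall i j, 0 <= a i j <= 1) ->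
    (forall i j, measurable [set w : T | t i j w]) ->
    (forall i j, E i j -> P [set w : T | t i j w] = (a i j)%:E) ->
    (forall i j, ~~ E i j -> (forall w, t i j w = false) /\ a i j = 0) ->
    mutually_independent P (fun p : 'I_m * 'I_n => [set w : T | t p.1 p.2 w]) ->
    (\sum_(j < n) (x j : nat) <= k)%N ->
    exists (s' : state R) (cost : nat),
      exec prog (init_state k alpha x a) cost s' /\
      (cost <= c * (n + m + 1) ^ e)%N /\
      ((rv s' 0%N)%:E = CVaR P alpha (sigma R t x)).
Proof.
exists cvar_prog, 40%N, 2%N.
move=> R d T P n m k alpha E a t x _ /andP[alpha_gt0 alpha_le1] _ mt PE notE indep _.
have Pt i j : P [set w | t i j w] = (a i j)%:E.
  have [/PE //|/notE[t_false ->]] := boolP (E i j).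
  have -> : [set w | t i j w] = set0 by apply/seteqP; split=> w; rewrite /= t_false.
  exact: measure0.
have [s' [cost [run le_cost out]]] := cvar_prog_correct (init_state_inputs k alpha x a).
exists s', cost; split=> //; split=> //.
by rewrite out (CVaR_sigma x mt Pt indep) // item_pmf_init_state.
Qed.
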